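(* Let $\mathcal{G}$ be a GBS graph of groups and $w=a_0^{k_0}y_1a_1^{k_1}\cdots y_na_n^{k_n}$ a $\mathcal{G}$-factorization. Let $1\le i_1<\dots<i_j\le n$ be indices such that $[i_1]\cdots[i_j]\in\Sigma_w^*$ is freely reduced and $\mathcal{C}(w)=[1]\cdots[n]=[i_1]\cdots[i_j]$ in $F_{\Lambda_w}$. Then the $\mathcal{G}$-factorization $$\hat w=a_0^{k_{0,i_1-1}}\,y_{i_1}\,a_{i_1}^{k_{i_1,i_2-1}}\cdots y_{i_j}\,a_{i_j}^{k_{i_j,n}}$$ is Britton-reduced and $w=\hat w$ in $F(\mathcal{G})$.
   Context: $\mathcal{G}$: finite connected graph $Y$ (vertices $V(Y)$, edges $E(Y)$, maps $\iota,\tau$, fixed-point-free involution $y\mapsto\bar y$ with $\iota(\bar y)=\tau(y)$) and integers $\alpha_y,\beta_y\ne0$ with $\alpha_y=\beta_{\bar y}$; $F(\mathcal{G})$ has generators $V(Y)\cup E(Y)$ and relations $\bar yy=1$, $y\,b^{\beta_y}\bar y=a^{\alpha_y}$ ($a=\iota(y)$, $b=\tau(y)$). A $\mathcal{G}$-factorization is a word $a_0^{k_0}y_1a_1^{k_1}\cdots y_na_n^{k_n}$ with $\iota(y_i)=a_{i-1}$, $\tau(y_i)=a_i$, $a_n=a_0$, $k_i\in\mathbb{Z}$ ($a^0$ = empty word). For $0\le i\le j\le n$: $w_{i,j}=a_i^{k_i}y_{i+1}\cdots y_ja_j^{k_j}$, $k_{i,j}=\sum_{\nu=i}^{j}k_\nu\prod_{\mu=i+1}^{\nu}\alpha_{y_\mu}/\beta_{y_\mu}\in\mathbb{Q}$.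 Fix an orientation $D\subseteq E(Y)$ and let $\rho$ map words additively to $\mathbb{Z}^D$ via $\rho(a^k)=0$, $\rho(y)=e_y$, $\rho(\bar y)=-e_y$ ($y\in D$). On $\{1,\dots,n\}$ let $i\sim_{\mathcal{C}}j$ iff $y_i=\bar y_j$ and, for $i<j$, $\rho(w_{i,j-1})=0$ and $k_{i,j-1}\in\beta_{y_i}\mathbb{Z}$ (symmetrically for $j<i$); $i\approx j$ iff $i=j$ or $i\sim_{\mathcal{C}}\ell\sim_{\mathcal{C}}j$ for some $\ell$ (an equivalence relation). $\Sigma_w$ is the set of $\approx$-classes $[i]$, enlarged: $\overline{[i]}:=[j]$ if $i\sim_{\mathcal{C}}j$ for some $j$ (well defined), otherwise $\overline{[i]}$ is a new element; this is a fixed-point-free involution on $\Sigma_w$. $\Lambda_w$ contains one element of each pair $\{x,\bar x\}$; $F_{\Lambda_w}$ is the free group on $\Lambda_w$ with $\bar x=x^{-1}$; a word over $\Sigma_w$ is freely reduced if it has no factor $x\bar x$. Britton reductions are the rules $a^ka^m\to a^{k+m}$ ($a\in V(Y)$, $k,m\neq0$) and $y\,b^{\beta_y m}\bar y\to a^{\alpha_y m}$ ($a=\iota(y)$, $b=\tau(y)$, $m\in\mathbb{Z}$); a word is Britton-reduced if none applies. *)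

From HB Require Import structures.
From mathcomp Require Import all_boot all_order all_algebra.
From Stdlib Require Import Relations.Relation_Operators.
Set Implicit Arguments. Unset Strict Implicit. Unset Printing Implicit Defensive.
Import Order.TTheory GRing.Theory Num.Theory.
Local Open Scope ring_scope.

Record gbs := GBS {
  V : finType;
  E : finType;
  iotaY : E -> V;
  tau : E -> V;
  bar : E -> E;
  alpha : E -> int;
  beta : E -> int;
  bar_inv : forall y, bar (bar y) = y;
  bar_fpf : forall y, bar y <> y;
  iota_bar : forall y, iotaY (bar y) = tau y;
  alpha_nz : forall y, alpha y != 0;
  beta_nz : forall y, beta y != 0;
  alpha_beta_bar : forall y, alpha y = beta (bar y);
  connected : forall u v : V,
    connect (fun s t => [exists y, (iotaY y == s) && (tau y == t)]) u v
}.

Section GBS.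
Variable G : gbs.

Inductive letter := LV of V G & int | LE of E G.

Definition power (a : V G) (k : int) : seq letter :=
  if k == 0 then [::] else [:: LV a k].

Definition glet := ((V G + E G) * bool)%type.
Definition gpow (a : V G) (k : int) : seq glet :=
  nseq `|k|%N (inl a, (0 <= k)%R).
Definition interp_letter (l : letter) : seq glet :=
  match l with LV a k => gpow a k | LE y => [:: (inr y, true)] end.
Definition interp (s : seq letter) : seq glet := flatten (map interp_letter s).

Inductive frel : seq glet -> seq glet -> Prop :=
| frel_free x b : frel [:: (x, b); (x, ~~ b)] [::]
| frel_bar y : frel [:: (inr (bar y), true); (inr y, true)] [::]
| frel_edge y : frel ((inr y, true) :: gpow (tau y) (beta y) ++ [:: (inr (bar y), true)])
                     (gpow (iotaY y) (alpha y)).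
Definition fstep (u v : seq glet) : Prop :=
  exists p q l r, frel l r /\ u = p ++ l ++ q /\ v = p ++ r ++ q.
Definition Feq (u v : seq letter) : Prop :=
  clos_refl_sym_trans _ fstep (interp u) (interp v).

Definition britton_reduced (s : seq letter) : Prop :=
  (forall p q a k m, k != 0 -> m != 0 -> s <> p ++ LV a k :: LV a m :: q) /\
  (forall p q y m, s <> p ++ LE y :: power (tau y) (beta y * m) ++ LE (bar y) :: q).

(* a_0^{k_0} y_1 a_1^{k_1} ... y_n a_n^{k_n} *)
Record fact := Fact { fn : nat; fa : nat -> V G; fy : nat -> E G; fk : nat -> int }.

Definition is_fact (f : fact) : Prop :=
  (forall i, 1 <= i <= fn f -> iotaY (fy f i) = fa f i.-1 /\ tau (fy f i) = fa f i)%N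
  /\ fa f (fn f) = fa f 0.

Definition word_of (f : fact) : seq letter :=
  power (fa f 0) (fk f 0) ++
  flatten [seq LE (fy f i) :: power (fa f i) (fk f i) | i <- iota 1 (fn f)].

Definition kq (f : fact) (i j : nat) : rat :=
  \sum_(i <= nu < j.+1)
    ((fk f nu)%:~R * \prod_(i.+1 <= mu < nu.+1)
        ((alpha (fy f mu))%:~R / (beta (fy f mu))%:~R)).

Definition orientation (D : {set E G}) : Prop := forall y, (y \in D) != (bar y \in D).
Definition e_vec (y : E G) : {ffun E G -> int} := [ffun z => Posz ((z == y) : nat)].
Definition rho_e (D : {set E G}) (y : E G) : {ffun E G -> int} :=
  if y \in D then e_vec y else - e_vec (bar y).
(* rho(w_{i,j}) : the edges of w_{i,j} are y_{i+1}, ..., y_j *)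
Definition rho (D : {set E G}) (f : fact) (i j : nat) : {ffun E G -> int} :=
  \sum_(i.+1 <= mu < j.+1) rho_e D (fy f mu).

Definition in_bZ (q : rat) (b : int) : Prop := exists z : int, q = (b * z)%:~R.

Definition simC (D : {set E G}) (f : fact) (i j : nat) : Prop :=
  (1 <= i <= fn f)%N /\ (1 <= j <= fn f)%N /\ fy f i = bar (fy f j) /\
  (((i < j)%N /\ rho D f i j.-1 = 0 /\ in_bZ (kq f i j.-1) (beta (fy f i))) \/
   ((j < i)%N /\ rho D f j i.-1 = 0 /\ in_bZ (kq f j i.-1) (beta (fy f j)))).

Definition approx (D : {set E G}) (f : fact) (i j : nat) : Prop :=
  i = j \/ exists l, simC D f i l /\ simC D f l j.

(* Sigma_w: (i,true) stands for [i], (i,false) for bar[i] *)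
Definition sig_eq (D : {set E G}) (f : fact) (x x' : nat * bool) : Prop :=
  (x.2 = x'.2 /\ approx D f x.1 x'.1) \/ (x.2 <> x'.2 /\ simC D f x.1 x'.1).
Definition sig_bar (x : nat * bool) : nat * bool := (x.1, ~~ x.2).

Definition freely_reduced (D : {set E G}) (f : fact) (s : seq (nat * bool)) : Prop :=
  forall p q x x', s = p ++ x :: x' :: q -> ~ sig_eq D f x' (sig_bar x).

Inductive lstep (D : {set E G}) (f : fact) : seq (nat * bool) -> seq (nat * bool) -> Prop :=
| lstep_cancel p q x x' : sig_eq D f x' (sig_bar x) -> lstep D f (p ++ x :: x' :: q) (p ++ q)
| lstep_subst p q x x' : sig_eq D f x x' -> lstep D f (p ++ x :: q) (p ++ x' :: q).
Definition Leq (D : {set E G}) (f : fact) (u v : seq (nat * bool)) : Prop :=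
  clos_refl_sym_trans _ (lstep D f) u v.

Definition cls (s : seq nat) : seq (nat * bool) := [seq (i, true) | i <- s].

(* start index i_t (with i_0 = 0) and end index i_{t+1}-1 (with i_{j+1} = n+1) *)
Definition hat_start (idx : seq nat) (t : nat) : nat := nth 0%N (0%N :: idx) t.
Definition hat_end (n : nat) (idx : seq nat) (t : nat) : nat := (nth n.+1 idx t).-1.

End GBS.

From Pilot Require Import Defs.
From HB Require Import structures.
From mathcomp Require Import all_boot all_order all_algebra.
From mathcomp Require Import ring.
From Stdlib Require Import Relations.Relation_Operators.
Set Implicit Arguments. Unset Strict Implicit. Unset Printing Implicit Defensive.
Import Order.TTheory GRing.Theory Num.Theory.

(* Weight position i of w by P_i, the product of the ratios alpha/beta of
   y_1 .. y_i, and give it the key (y_i, rho(w_{0,i-1}), the class modulo Z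
   of (sum_{nu<i} k_nu P_nu) / (P_i beta_{y_i})).  Then i ~_C j holds exactly
   when the key of j is the formal inverse of the key of i, so equality in
   F_{Lambda_w} becomes equality of the free reductions of the key sequences.
   Reading w from left to right and cancelling y_p ... y_{m+1} whenever their
   keys are inverse computes that free reduction, and keeps in F(G) a word of
   the shape of w-hat on the surviving positions: the cancelled segment is
   y b^{beta z} y^-1 = a^{alpha z}, absorbed into the preceding power.  Any
   index sequence with the same keys, i_1 < ... < i_j in particular, gives the
   same element, and it is Britton-reduced because a pinch y b^{beta m} y^-1
   between consecutive survivors would be an instance of ~_C. *)

Section GroupRelations.
Variable G : gbs.
Local Notation glt := (glet G).

Definition feq (u v : seq glt) := clos_refl_sym_trans _ (@fstep G) u v.

Lemma feq_refl (u : seq glt) : feq u u. Proof. exact: rst_refl. Qed.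
Lemma feq_sym (u v : seq glt) : feq u v -> feq v u. Proof. exact: rst_sym. Qed.
Lemma feq_trans (u v w : seq glt) : feq u v -> feq v w -> feq u w.
Proof. exact: rst_trans. Qed.

Lemma feq_ctx (x z u v : seq glt) : feq u v -> feq (x ++ u ++ z) (x ++ v ++ z).
Proof.
elim=> [a b [p [q [l [r [H [-> ->]]]]]]|a|a b _ IH|a b c _ IH1 _ IH2].
- by apply: rst_step; exists (x ++ p), (q ++ z), l, r; rewrite !catA.
- exact: feq_refl.
- exact: feq_sym.
- exact: feq_trans IH2.
Qed.

Lemma feq_catl (x u v : seq glt) : feq u v -> feq (x ++ u) (x ++ v).
Proof. by move=> H; have := feq_ctx x [::] H; rewrite !cats0. Qed.
Lemma feq_catr (z u v : seq glt) : feq u v -> feq (u ++ z) (v ++ z).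
Proof. by move=> H; exact: (feq_ctx [::] z H). Qed.
Lemma feq_cat (u u' v v' : seq glt) : feq u u' -> feq v v' -> feq (u ++ v) (u' ++ v').
Proof. by move=> H1 H2; apply: feq_trans (feq_catr _ H1) (feq_catl _ H2). Qed.

Lemma feq_rel (l r : seq glt) : Defs.frel l r -> feq l r.
Proof. by move=> H; apply: rst_step; exists [::], [::], l, r; rewrite !cats0. Qed.

Lemma feq_nseq_cancel (x : V G + E G) b n m :
  feq (nseq n (x, b) ++ nseq m (x, ~~ b))
      (if (m <= n)%N then nseq (n - m) (x, b) else nseq (m - n) (x, ~~ b)).
Proof.
elim: n m => [|n IH] [|m] /=; rewrite ?cats0; try exact: feq_refl.
rewrite ltnS subSS; apply: (feq_trans _ (IH m)).
have -> : (x, b) :: nseq n (x, b) ++ (x, ~~ b) :: nseq m (x, ~~ b) =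
          nseq n (x, b) ++ [:: (x, b); (x, ~~ b)] ++ nseq m (x, ~~ b).
  by elim: {IH} n => //= n ->.
exact: feq_ctx (feq_rel (frel_free x b)).
Qed.

Lemma feq_gpowD (a : V G) (k m : int) : feq (gpow a k ++ gpow a m) (gpow a (k + m)).
Proof.
rewrite /gpow; case: k => k; case: m => m.
- by rewrite -PoszD /= -nseqD; exact: feq_refl.
- rewrite NegzE /=; apply: feq_trans (feq_nseq_cancel (inl a) true k m.+1) _.
  case: ifP => H; first by rewrite subzn //; exact: feq_refl.
  have H' : (k <= m.+1)%N by rewrite ltnW // ltnNge H.
  rewrite -opprB subzn // abszN /= oppr_ge0 lez_nat leqn0 subn_eq0 H.
  exact: feq_refl.
- rewrite NegzE /=; apply: feq_trans (feq_nseq_cancel (inl a) false k.+1 m) _.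
  rewrite addrC; case: ifP => H.
    rewrite -opprB subzn // abszN /= oppr_ge0 lez_nat leqn0 subn_eq0.
    case E: (k.+1 - m)%N => [|d] /=; first exact: feq_refl.
    by rewrite leqNgt -subn_gt0 E; exact: feq_refl.
  have H' : (k.+1 <= m)%N by rewrite ltnW // ltnNge H.
  by rewrite subzn //; exact: feq_refl.
- have -> : (Negz k + Negz m)%R = Negz (k + m).+1 by [].
  have nseqN n : nseq `|Negz n|%N (inl a, (0 <= Negz n)%R) = nseq n.+1 (@inl _ (E G) a, false)
    by [].
  by rewrite !nseqN -nseqD addSn addnS; exact: feq_refl.
Qed.

Definition gedge (y : E G) : glt := (inr y, true).

Lemma feq_edge_bar y : feq [:: gedge y; gedge (bar y)] [::].
Proof. by have := frel_bar (bar y); rewrite bar_inv => /feq_rel. Qed.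

Lemma feq_bar_edge y : feq [:: gedge (bar y); gedge y] [::].
Proof. exact/feq_rel/frel_bar. Qed.

Lemma feq_conj_edge_nat y (n : nat) :
  feq (gedge y :: gpow (tau y) (beta y * n%:Z) ++ [:: gedge (bar y)])
      (gpow (iotaY y) (alpha y * n%:Z)).
Proof.
elim: n => [|n IH]; first by rewrite !mulr0; exact: feq_edge_bar.
set b := tau y; set a := iotaY y.
rewrite -addn1 PoszD !mulrDr !mulr1.
apply: feq_trans (feq_gpowD a _ _).
apply: feq_trans (feq_cat IH (feq_rel (frel_edge y))).
apply: (@feq_trans _ (gedge y :: gpow b (beta y * n%:Z) ++ gpow b (beta y) ++ [:: gedge (bar y)])).
  have := feq_sym (feq_gpowD b (beta y * n%:Z) (beta y)).
  by move/(feq_ctx [:: gedge y] [:: gedge (bar y)]); rewrite /= -catA.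
have := feq_ctx (gedge y :: gpow b (beta y * n%:Z)) (gpow b (beta y) ++ [:: gedge (bar y)])
                (feq_sym (feq_bar_edge y)).
by rewrite /= -!catA.
Qed.

Lemma feq_conj_edge y (z : int) :
  feq (gedge y :: gpow (tau y) (beta y * z) ++ [:: gedge (bar y)])
      (gpow (iotaY y) (alpha y * z)).
Proof.
case: z => n; first exact: feq_conj_edge_nat.
rewrite NegzE !mulrN.
set b := tau y; set a := iotaY y; set N := n.+1.
set u := gedge y :: gpow b (- (beta y * N%:Z)) ++ [:: gedge (bar y)].
have cancel_a : feq (gpow a (alpha y * N%:Z) ++ gpow a (- (alpha y * N%:Z))) [::].
  by apply: feq_trans (feq_gpowD _ _ _) _; rewrite subrr; exact: feq_refl.
apply: (@feq_trans _ (u ++ gpow a (alpha y * N%:Z) ++ gpow a (- (alpha y * N%:Z)))).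
  by have := feq_catl u (feq_sym cancel_a); rewrite cats0.
apply: (@feq_trans _ (u ++ (gedge y :: gpow b (beta y * N%:Z) ++ [:: gedge (bar y)]) ++
                      gpow a (- (alpha y * N%:Z)))).
  exact/feq_catl/feq_catr/feq_sym/feq_conj_edge_nat.
rewrite /u /= -!catA /=.
have := feq_ctx (gedge y :: gpow b (- (beta y * N%:Z)))
          (gpow b (beta y * N%:Z) ++ gedge (bar y) :: gpow a (- (alpha y * N%:Z)))
          (feq_bar_edge y).
move=> /feq_trans; apply.
have := feq_ctx [:: gedge y] (gedge (bar y) :: gpow a (- (alpha y * N%:Z)))
          (feq_gpowD b (- (beta y * N%:Z)) (beta y * N%:Z)).
rewrite addNr /= -catA => /feq_trans; apply.
exact: (feq_ctx [::] _ (feq_edge_bar y)).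
Qed.

Lemma feq_edge_shift (y : E G) (z e : int) :
  feq (gedge y :: gpow (tau y) e)
      (gpow (iotaY y) (alpha y * z) ++ gedge y :: gpow (tau y) (e - beta y * z)).
Proof.
apply: feq_sym.
have shift : feq (gpow (iotaY y) (alpha y * z) ++ [:: gedge y])
                 (gedge y :: gpow (tau y) (beta y * z)).
  apply: feq_trans (feq_catr [:: gedge y] (feq_sym (feq_conj_edge y z))) _.
  have := feq_ctx (gedge y :: gpow (tau y) (beta y * z)) [::] (feq_bar_edge y).
  by rewrite !cats0 /= -!catA.
rewrite -cat1s catA; apply: feq_trans (feq_catr _ shift) _.
rewrite cat_cons; apply: (feq_catl [:: gedge y]); apply: feq_trans (feq_gpowD _ _ _) _.
by rewrite addrC subrK; exact: feq_refl.
Qed.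

End GroupRelations.

Local Open Scope ring_scope.

Section Weights.
Variable G : gbs.
Variable D : {set E G}.
Hypothesis HD : orientation D.
Variable f : fact G.

Definition ratio (y : E G) : rat := (alpha y)%:~R / (beta y)%:~R.

Lemma alpha_neq0r (y : E G) : ((alpha y)%:~R : rat) != 0.
Proof. by rewrite intr_eq0 alpha_nz. Qed.
Lemma beta_neq0r (y : E G) : ((beta y)%:~R : rat) != 0.
Proof. by rewrite intr_eq0 beta_nz. Qed.

Lemma ratio_neq0 (y : E G) : ratio y != 0.
Proof. by rewrite mulf_neq0 ?invr_eq0 ?alpha_neq0r ?beta_neq0r. Qed.

Lemma alpha_bar (y : E G) : alpha (bar y) = beta y.
Proof. by rewrite alpha_beta_bar bar_inv. Qed.

Lemma tau_bar (y : E G) : tau (bar y) = iotaY y.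
Proof. by rewrite -iota_bar bar_inv. Qed.

Lemma ratio_bar (y : E G) : ratio (bar y) = (ratio y)^-1.
Proof. by rewrite /ratio alpha_bar -alpha_beta_bar invf_div. Qed.

Lemma ratio_beta (y : E G) : ratio y * (beta y)%:~R = (alpha y)%:~R.
Proof. by rewrite /ratio mulfVK ?beta_neq0r. Qed.

Definition wt (m : nat) : rat := \prod_(1 <= mu < m.+1) ratio (fy f mu).
Definition wsum (m : nat) : rat := \sum_(0 <= nu < m) (fk f nu)%:~R * wt nu.

Lemma wtS m : wt m.+1 = wt m * ratio (fy f m.+1).
Proof. by rewrite /wt big_nat_recr. Qed.

Lemma wtSpred m : (0 < m)%N -> wt m = wt m.-1 * ratio (fy f m).
Proof. by case: m => // m _; rewrite wtS. Qed.

Lemma wsumS m : wsum m.+1 = wsum m + (fk f m)%:~R * wt m.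
Proof. by rewrite /wsum big_nat_recr. Qed.

Lemma kq_wsum i j : (i <= j.+1)%N -> wt i * kq f i j = wsum j.+1 - wsum i.
Proof.
move=> Hij; rewrite /wsum (@big_cat_nat _ _ _ i 0 j.+1) //= addrAC subrr add0r.
rewrite /kq mulr_sumr; apply: eq_big_nat => nu /andP [Hi _].
by rewrite /wt (@big_cat_nat _ _ _ i.+1 1 nu.+1) //= mulrCA mulrA.
Qed.

Lemma kq_nn i : kq f i i = (fk f i)%:~R.
Proof. by rewrite /kq big_nat1 big_geq // mulr1. Qed.

Local Notation FV := {ffun E G -> int}.

Definition rhop (m : nat) : FV := rho D f 0 m.

Lemma rhopS m : rhop m.+1 = rhop m + rho_e D (fy f m.+1).
Proof. by rewrite /rhop /rho big_nat_recr. Qed.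

Lemma rhopSpred m : (0 < m)%N -> rhop m = rhop m.-1 + rho_e D (fy f m).
Proof. by case: m => // m _; rewrite rhopS. Qed.

Lemma rho_rhop i j : (i <= j)%N -> rho D f i j = rhop j - rhop i.
Proof.
by move=> H; rewrite /rhop /rho (@big_cat_nat _ _ _ i.+1 1 j.+1) //= addrC addrK.
Qed.

Lemma rho_e_bar y : rho_e D (bar y) = - rho_e D y.
Proof.
rewrite /rho_e bar_inv; have := HD y.
by case: (y \in D); case: (bar y \in D) => //= _; rewrite opprK.
Qed.

Definition ratio_pow (R : FV) : rat := \prod_(e in D) ratio e ^ (R e).

Lemma ratio_powD R1 R2 : ratio_pow (R1 + R2) = ratio_pow R1 * ratio_pow R2.
Proof.
rewrite /ratio_pow -big_split; apply: eq_bigr => e _.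
by rewrite ffunE expfzDr // ratio_neq0.
Qed.

Lemma ratio_pow_neq0 R : ratio_pow R != 0.
Proof.
by apply/prodf_neq0 => e _; rewrite expfz_eq0 negb_and ratio_neq0 orbT.
Qed.

Lemma ratio_pow_rho_e y : ratio_pow (rho_e D y) = ratio y.
Proof.
have ratio_pow_e z : z \in D -> ratio_pow (e_vec z) = ratio z.
  move=> Hz; rewrite /ratio_pow (bigD1 z) //= big1 ?mulr1; first by rewrite ffunE eqxx expr1z.
  by move=> e /andP [_ He]; rewrite ffunE (negbTE He) expr0z.
rewrite /rho_e; case: ifP => Hy; first exact: ratio_pow_e.
have Hb : bar y \in D by have := HD y; rewrite Hy; case: (bar y \in D).
have ratio_powN R : ratio_pow (- R) = (ratio_pow R)^-1.
  by rewrite /ratio_pow -prodfV; apply: eq_bigr => e _; rewrite ffunE invr_expz.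
by rewrite ratio_powN ratio_pow_e // ratio_bar invrK.
Qed.

Lemma wt_ratio_pow m : wt m = ratio_pow (rhop m).
Proof.
elim: m => [|m IH].
  rewrite /wt /rhop /rho !big_geq // /ratio_pow big1 // => e _.
  by rewrite ffunE expr0z.
by rewrite wtS rhopS ratio_powD IH ratio_pow_rho_e.
Qed.

Lemma wt_neq0 m : wt m != 0.
Proof. by rewrite wt_ratio_pow ratio_pow_neq0. Qed.

Lemma wt_rhop i j : rhop i = rhop j -> wt i = wt j.
Proof. by rewrite !wt_ratio_pow => ->. Qed.

End Weights.

Section Keys.
Variable G : gbs.
Variable D : {set E G}.
Hypothesis HD : orientation D.
Variable f : fact G.

Local Notation FV := {ffun E G -> int}.
Local Notation wt := (wt f).
Local Notation wsum := (wsum f).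
Local Notation rhop := (rhop D f).

Definition key_t := (E G * FV * rat)%type.

Definition modulus (y : E G) (R : FV) : rat := ratio_pow D R * (alpha y)%:~R.
Definition frac (x : rat) : rat := x - (Num.floor x)%:~R.

Definition ckey (i : nat) : key_t :=
  (fy f i, rhop i.-1, frac (wsum i / modulus (fy f i) (rhop i.-1))).
Definition ckey_inv (k : key_t) : key_t := (bar k.1.1, k.1.2 + rho_e D k.1.1, k.2).

Lemma ckey_invK : involutive ckey_inv.
Proof. by case=> [[y R] c]; rewrite /ckey_inv /= bar_inv rho_e_bar // addrK. Qed.

Lemma ckey_inv_neq k : ckey_inv k != k.
Proof. by case: k => [[y R] c]; apply/negP => /eqP [] /bar_fpf. Qed.

Lemma modulus_bar y R : modulus (bar y) (R + rho_e D y) = modulus y R.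
Proof. by rewrite /modulus ratio_powD ratio_pow_rho_e // alpha_bar -mulrA ratio_beta. Qed.

Lemma modulus_neq0 y R : modulus y R != 0.
Proof. by rewrite mulf_neq0 ?ratio_pow_neq0 ?alpha_neq0r. Qed.

Lemma modulus_wt p : (0 < p)%N -> modulus (fy f p) (rhop p.-1) = wt p * (beta (fy f p))%:~R.
Proof. by move=> p0; rewrite /modulus -wt_ratio_pow // (wtSpred f p0) -mulrA ratio_beta. Qed.

Lemma frac_eq x y : frac x = frac y <-> exists z : int, x - y = z%:~R.
Proof.
split=> [H|[z H]].
  exists (Num.floor x - Num.floor y); rewrite intrB.
  apply/eqP; rewrite -subr_eq0; apply/eqP.
  have -> : x - y - ((Num.floor x)%:~R - (Num.floor y)%:~R) = frac x - frac y
    by rewrite /frac; ring.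
  by rewrite H subrr.
have -> : x = y + z%:~R by rewrite -H addrC subrK.
by rewrite /frac floorDrz ?intr_int // intrKfloor intrD; ring.
Qed.

Lemma ckey_eq_wsum p1 p2 : (0 < p1)%N -> ckey p1 = ckey p2 ->
  exists z : int, wsum p2 - wsum p1 = wt p1 * (beta (fy f p1) * z)%:~R.
Proof.
move=> p0 [ey eR]; rewrite -ey -eR => /frac_eq [z Hz].
exists (- z); have hM := modulus_neq0 (fy f p1) (rhop p1.-1).
by rewrite intrM mulrA -modulus_wt // intrN -Hz; field.
Qed.

Lemma ckey_inv_iff i j : (0 < i < j)%N ->
  ckey j = ckey_inv (ckey i) <->
  [/\ fy f j = bar (fy f i), rho D f i j.-1 = 0 & in_bZ (kq f i j.-1) (beta (fy f i))].
Proof.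
move=> /andP [i0 ij]; have ij1 : (i <= j.-1)%N by rewrite -ltnS prednK // (leq_ltn_trans _ ij).
have Ri := rhopSpred D f i0.
have rhoij : rho D f i j.-1 = rhop j.-1 - rhop i by rewrite rho_rhop.
have Kc : (wsum j - wsum i) / modulus (fy f i) (rhop i.-1) = kq f i j.-1 / (beta (fy f i))%:~R.
  have j0 : (0 < j)%N := leq_ltn_trans (leq0n i) ij.
  rewrite -[j in wsum j](prednK j0) -kq_wsum; last by rewrite prednK // ltnW.
  rewrite modulus_wt //; have := wt_neq0 HD f i; have := beta_neq0r (fy f i).
  by move=> *; field; apply/andP.
have Kz z : kq f i j.-1 / (beta (fy f i))%:~R = z%:~R <-> kq f i j.-1 = (beta (fy f i) * z)%:~R.
  by rewrite intrM; split=> H; [rewrite -H | rewrite H]; field; rewrite beta_neq0r.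
rewrite /ckey /ckey_inv; split=> /=.
  case=> e1 e2 e3; have eR : rhop j.-1 = rhop i by rewrite e2 Ri.
  split => //; first by rewrite rhoij eR subrr.
  rewrite e1 eR Ri modulus_bar in e3; case/frac_eq: e3 => z Hz.
  by exists z; apply/Kz; rewrite -Kc mulrBl.
case=> e1 e2 [z /Kz Hz].
have eR : rhop j.-1 = rhop i by apply/eqP; rewrite -subr_eq0 -rhoij e2.
rewrite e1 eR Ri modulus_bar; congr (_, _, _); apply/frac_eq; exists z.
by rewrite -mulrBl Kc.
Qed.

Lemma simC_ckey i j : simC D f i j <->
  [/\ (1 <= i <= fn f)%N, (1 <= j <= fn f)%N & ckey j = ckey_inv (ckey i)].
Proof.
split.
  case=> Hi [Hj [Hy H]]; split => //.
  case: H => [[ij [H1 H2]]|[ji [H1 H2]]].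
    apply/ckey_inv_iff; first by rewrite ij andbT; case/andP: Hi.
    by split => //; rewrite Hy bar_inv.
  apply: (canRL ckey_invK); apply/esym/ckey_inv_iff => //.
  by rewrite ji andbT; case/andP: Hj.
case=> /[dup] Hi /andP [i0 _] /[dup] Hj /andP [j0 _] Hk; split => //; split => //.
case: (ltngtP i j) => c.
- by have [e1 e2 e3] := proj1 (ckey_inv_iff (i:=i) (j:=j) (introT andP (conj i0 c))) Hk;
     split; [rewrite e1 bar_inv | left].
- have Hk' : ckey i = ckey_inv (ckey j) by rewrite Hk ckey_invK.
  have [e1 e2 e3] := proj1 (ckey_inv_iff (i:=j) (j:=i) (introT andP (conj j0 c))) Hk'.
  by split => //; right.
- by move: Hk; rewrite c => /eqP; rewrite eq_sym (negbTE (ckey_inv_neq _)).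
Qed.

Definition sig_key (x : nat * bool) : key_t :=
  if x.2 then ckey x.1 else ckey_inv (ckey x.1).

Lemma sig_key_bar x : sig_key (sig_bar x) = ckey_inv (sig_key x).
Proof. by case: x => i [] //=; rewrite ckey_invK. Qed.

Lemma sig_eq_key x x' : sig_eq D f x x' -> sig_key x = sig_key x'.
Proof.
case: x x' => i b [j b'] [[/= eb [<-|[l [/simC_ckey [_ _ H1] /simC_ckey [_ _ H2]]]]]|[/= eb]].
- by rewrite eb.
- by rewrite /sig_key /= eb H2 H1 ckey_invK.
case/simC_ckey => _ _ H.
by rewrite /sig_key /=; case: b b' eb => [] [] //= _; rewrite H ?ckey_invK.
Qed.

End Keys.

Section FreeReduction.
Variable T : eqType.
Variable inv : T -> T.
Hypothesis invK : involutive inv.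

(* The reduct is kept as a stack: its head is the last surviving letter. *)
Definition red_push (s : seq T) (x : T) : seq T :=
  if s is t :: s' then (if t == inv x then s' else x :: s) else [:: x].
Definition free_red (l : seq T) : seq T := foldl red_push [::] l.

Definition reducedb (l : seq T) : bool :=
  if l is a :: l' then path (fun a b => b != inv a) a l' else true.

Lemma reducedb_push s x : reducedb s -> reducedb (red_push s x).
Proof.
case: s => [//|t s] /=; case: ifP => [_|/negbT tx Hs] /=.
  by case: s => //= u s /andP [].
by rewrite tx.
Qed.

Lemma red_push_cancel s x : reducedb s -> red_push (red_push s x) (inv x) = s.
Proof.
case: s => [|t s] /=; first by rewrite invK eqxx.
case: ifP => [/eqP -> |_]; last by rewrite /= invK eqxx.
by case: s => [|u s] //= /andP [/negbTE ->].
Qed.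

Lemma reducedb_free_red l : reducedb (free_red l).
Proof.
rewrite /free_red; elim: l [::] (isT : reducedb [::]) => [//|x l IH] s Hs /=.
exact/IH/reducedb_push.
Qed.

Lemma free_red_cancel p q x : free_red (p ++ x :: inv x :: q) = free_red (p ++ q).
Proof. by rewrite /free_red !foldl_cat /= red_push_cancel // reducedb_free_red. Qed.

Lemma free_red_reduced l : reducedb l -> free_red l = rev l.
Proof.
elim/last_ind: l => [//|l x IH] H.
have Hl : reducedb l by case: l H {IH} => [//|a l] /=; rewrite rcons_path => /andP [].
rewrite /free_red -cats1 foldl_cat -/(free_red l) IH // cats1 rev_rcons /=.
case/lastP: l H Hl {IH} => [//|l y]; rewrite rev_rcons /=.
case: l => [|a l] /=; rewrite ?rcons_path ?last_rcons /= ?andbT => H _;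
  by case: ifP => // /eqP E; move: H; rewrite E invK eqxx ?andbF.
Qed.

End FreeReduction.

Section KeyReduction.
Variable G : gbs.
Variable D : {set E G}.
Hypothesis HD : orientation D.
Variable f : fact G.

Local Notation ckey := (ckey D f).
Local Notation ckey_inv := (ckey_inv D).
Local Notation key_red := (free_red ckey_inv).

Lemma Leq_key_red u v :
  Leq D f u v -> key_red (map (sig_key D f) u) = key_red (map (sig_key D f) v).
Proof.
elim=> [a b []|a|a b _ IH|a b c _ IH1 _ IH2] //; last by rewrite IH1.
- move=> p q x x' /(sig_eq_key HD); rewrite sig_key_bar // => E.
  by rewrite !map_cat /= E (free_red_cancel (ckey_invK HD)).
- by move=> p q x x' /(sig_eq_key HD) Ex; rewrite !map_cat /= Ex.
Qed.

Lemma map_sig_key_cls s : map (sig_key D f) (cls s) = map ckey s.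
Proof. by rewrite -map_comp. Qed.

Lemma freely_reduced_keys idx : all (fun i => (0 < i <= fn f)%N) idx ->
  freely_reduced D f (cls idx) -> reducedb ckey_inv (map ckey idx).
Proof.
move=> Hall Hfr.
have adj p q i i' : idx = p ++ i :: i' :: q -> ckey i' != ckey_inv (ckey i).
  move=> E; apply/negP => /eqP Hk.
  have inI j : j \in idx -> (0 < j <= fn f)%N by move/allP: Hall; apply.
  apply: (Hfr (cls p) (cls q) (i, true) (i', true)); first by rewrite E /cls map_cat.
  right; split => //=; apply/simC_ckey => //; split; last by rewrite Hk ckey_invK.
    by apply: inI; rewrite E mem_cat !inE eqxx !orbT.
  by apply: inI; rewrite E mem_cat !inE eqxx !orbT.
elim: idx adj {Hall Hfr} => [//|a [//|b l] IH] adj /=.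
apply/andP; split; first exact: (adj [::] l).
by apply: IH => p q i i' E; apply: (adj (a :: p) q); rewrite E.
Qed.

End KeyReduction.

Section StackWords.
Variable G : gbs.
Variable f : fact G.

Lemma interp_cat (u v : seq (letter G)) : interp (u ++ v) = interp u ++ interp v.
Proof. by rewrite /interp map_cat flatten_cat. Qed.

Lemma interp_LE (y : E G) s : interp (LE y :: s) = gedge y :: interp s.
Proof. by []. Qed.

Lemma interp_power (a : V G) k : interp (power a k) = gpow a k.
Proof. by rewrite /power /interp; case: ifP => [/eqP ->|] //=; rewrite cats0. Qed.

Lemma word_of_S N (A : nat -> V G) (Y : nat -> E G) (K : nat -> int) :
  word_of (Fact N.+1 A Y K) = word_of (Fact N A Y K) ++ LE (Y N.+1) :: power (A N.+1) (K N.+1).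
Proof.
rewrite /word_of; simpl fn; simpl fa; simpl fy; simpl fk.
have -> : iota 1 N.+1 = iota 1 N ++ [:: N.+1] by rewrite -[N.+1]addn1 iotaD add1n addn1.
by rewrite map_cat flatten_cat /= cats0 catA.
Qed.

Definition word_upto (m : nat) : seq (letter G) := word_of (Fact m (fa f) (fy f) (fk f)).

Lemma word_uptoS m :
  word_upto m.+1 = word_upto m ++ LE (fy f m.+1) :: power (fa f m.+1) (fk f m.+1).
Proof. exact: word_of_S. Qed.

(* A stack lists positions of w, top first, and [stack_word s e] is w-hat
   built on them with exponent e after the top position.  The inner exponents
   are numerators of the k_{h,p-1}, i.e. these numbers once they are known to
   be integers. *)
Fixpoint stack_word (s : seq nat) (e : int) : seq (letter G) :=
  if s is p :: s' then
    stack_word s' (numq (kq f (head 0%N s') p.-1)) ++ LE (fy f p) :: power (fa f p) e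
  else power (fa f 0) e.

Lemma interp_stack_word s e :
  interp (stack_word s e) = interp (stack_word s 0) ++ gpow (fa f (head 0%N s)) e.
Proof.
case: s => [|p s] /=; first by rewrite !interp_power.
by rewrite !interp_cat interp_LE !interp_power -catA.
Qed.

Lemma feq_stack_word_gpow s e d :
  feq (interp (stack_word s e) ++ gpow (fa f (head 0%N s)) d) (interp (stack_word s (e + d))).
Proof.
rewrite [X in feq _ X]interp_stack_word interp_stack_word -catA.
exact/feq_catl/feq_gpowD.
Qed.

Lemma feq_stack_word_conj s y (g z k : int) : iotaY y = fa f (head 0%N s) ->
  feq (interp (stack_word s g) ++
         gedge y :: gpow (tau y) (beta y * z) ++ gedge (bar y) :: gpow (fa f (head 0%N s)) k)
      (interp (stack_word s (g + alpha y * z + k))).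
Proof.
move=> Hy; apply: (@feq_trans _ _ (interp (stack_word s g) ++
    gpow (iotaY y) (alpha y * z) ++ gpow (fa f (head 0%N s)) k)).
  have := feq_ctx (interp (stack_word s g)) (gpow (fa f (head 0%N s)) k) (feq_conj_edge y z).
  by rewrite /= -!catA.
rewrite Hy catA; apply: feq_trans (feq_catr _ (feq_stack_word_gpow _ _ _)) _.
exact: feq_stack_word_gpow.
Qed.

End StackWords.

Section KqIdentities.
Variable G : gbs.
Variable D : {set E G}.
Hypothesis HD : orientation D.
Variable f : fact G.

Local Notation wt := (wt f).
Local Notation wsum := (wsum f).
Local Notation rhop := (rhop D f).

Lemma wt_kq_pred h p : (h < p)%N -> wt h * kq f h p.-1 = wsum p - wsum h.
Proof.
by move=> hp; have p0 := leq_ltn_trans (leq0n h) hp; rewrite kq_wsum prednK // ltnW.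
Qed.

Lemma wt_edge h p : (h < p)%N -> rhop p.-1 = rhop h -> wt p = wt h * ratio (fy f p).
Proof. by move=> hp HR; rewrite wtSpred ?(leq_ltn_trans _ hp) // (wt_rhop HD HR). Qed.

Lemma kq_pop h p m (z : int) : (h < p)%N -> (p <= m)%N ->
  rhop p.-1 = rhop h -> rho D f p m = 0 -> fy f m.+1 = bar (fy f p) ->
  kq f p m = (beta (fy f p) * z)%:~R ->
  kq f h m.+1 = kq f h p.-1 + (alpha (fy f p) * z)%:~R + (fk f m.+1)%:~R.
Proof.
move=> hp pm HR Hrho Hy Hk; apply: (mulfI (wt_neq0 HD f h)).
have e_p := wt_edge hp HR.
have e_m : wt m.+1 = wt h.
  rewrite wtS Hy ratio_bar (wt_rhop HD (i:=m) (j:=p)) ?e_p ?mulfK ?ratio_neq0 //.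
  by apply/eqP; rewrite -subr_eq0 -rho_rhop // Hrho.
have wsum_m : wsum m.+1 = wsum p + wt p * kq f p m by rewrite kq_wsum ?leqW // addrC subrK.
rewrite kq_wsum; last by apply: leqW; apply: leqW; exact: leq_trans (ltnW hp) pm.
rewrite wsumS e_m !mulrDr wt_kq_pred // wsum_m e_p Hk !intrM -(ratio_beta (fy f p)).
ring.
Qed.

Lemma kq_gap h1 p1 h2 p2 (z B : int) : (h1 < p1)%N -> (h2 < p2)%N ->
  rhop p1.-1 = rhop h1 -> rhop h1 = rhop h2 ->
  wsum p2 - wsum p1 = wt p1 * (beta (fy f p1) * z)%:~R ->
  wsum h2 - wsum h1 = wt h1 * B%:~R ->
  kq f h2 p2.-1 = kq f h1 p1.-1 + (alpha (fy f p1) * z)%:~R - B%:~R.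
Proof.
move=> hp1 hp2 HR1 HR12 Hz HB; apply: (mulfI (wt_neq0 HD f h1)).
rewrite [in LHS](wt_rhop HD HR12) wt_kq_pred // !mulrDr mulrN wt_kq_pred // -HB.
have -> : wsum p2 = wsum p1 + wt p1 * (beta (fy f p1) * z)%:~R by rewrite -Hz addrC subrK.
rewrite (wt_edge hp1 HR1) !intrM -(ratio_beta (fy f p1)); ring.
Qed.

Lemma kq_shift_start h1 h2 m (B : int) : (h1 <= m)%N -> (h2 <= m)%N ->
  rhop h1 = rhop h2 -> wsum h2 - wsum h1 = wt h1 * B%:~R ->
  kq f h2 m = kq f h1 m - B%:~R.
Proof.
move=> h1m h2m HR HB; apply: (mulfI (wt_neq0 HD f h1)).
rewrite mulrBr [in LHS](wt_rhop HD HR) !kq_wsum ?leqW // -HB; ring.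
Qed.

End KqIdentities.

Section Stack.
Variable G : gbs.
Variable D : {set E G}.
Hypothesis HD : orientation D.
Variable f : fact G.
Hypothesis Hf : is_fact f.

Local Notation n := (fn f).
Local Notation ckey := (ckey D f).
Local Notation ckey_inv := (ckey_inv D).
Local Notation rhop := (rhop D f).
Local Notation stack_word := (stack_word f).

Lemma iota_fy i : (0 < i <= n)%N -> iotaY (fy f i) = fa f i.-1.
Proof. by case/(proj1 Hf). Qed.

Lemma tau_fy i : (0 < i <= n)%N -> tau (fy f i) = fa f i.
Proof. by case/(proj1 Hf). Qed.

Definition endpt (h : nat) := (fa f h, rhop h).
Definition is_intq (x : rat) := x = (numq x)%:~R.

Lemma is_intq_int (z : int) : is_intq z%:~R.
Proof. by rewrite /is_intq numq_int. Qed.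

Fixpoint stack_ok (s : seq nat) : Prop :=
  if s is p :: s' then
    [/\ stack_ok s', (head 0%N s' < p)%N, (p <= n)%N,
        endpt p.-1 = endpt (head 0%N s') & is_intq (kq f (head 0%N s') p.-1)]
  else True.

Definition stack_inv (m : nat) (s : seq nat) :=
  [/\ stack_ok s, (head 0%N s <= m)%N, endpt m = endpt (head 0%N s),
      is_intq (kq f (head 0%N s) m) &
      feq (interp (word_upto f m)) (interp (stack_word s (numq (kq f (head 0%N s) m))))].

Definition stack_push (s : seq nat) (i : nat) :=
  if s is t :: s' then (if ckey t == ckey_inv (ckey i) then s' else i :: s) else [:: i].
Definition stack (m : nat) := foldl stack_push [::] (iota 1 m).

Lemma stack_inv0 : stack_inv 0 [::].
Proof.
split => //=; rewrite kq_nn ?numq_int; first exact: is_intq_int.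
by rewrite /word_upto /word_of /= cats0; exact: feq_refl.
Qed.

Lemma stack_inv_push m s : (m < n)%N -> stack_inv m s -> stack_inv m.+1 (m.+1 :: s).
Proof.
move=> mn [Hok Hh HE Hk Hw]; split; rewrite //= ?kq_nn ?numq_int; first exact: is_intq_int.
by rewrite word_uptoS interp_cat [X in feq _ X]interp_cat; apply: feq_catr.
Qed.

Lemma stack_inv_pop m p s : (m < n)%N -> stack_inv m (p :: s) ->
  ckey p = ckey_inv (ckey m.+1) -> stack_inv m.+1 s.
Proof.
move=> mn [[Hok hp pn [Ha HR] Hg] /= pm HE Hk Hw] Hkey.
set h := head 0%N s in hp Ha HR Hg *.
have p0 : (0 < p)%N := leq_ltn_trans (leq0n h) hp.
have [Hy Hrho [z Hz]] : [/\ fy f m.+1 = bar (fy f p), rho D f p m = 0 &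
                            in_bZ (kq f p m) (beta (fy f p))].
  by apply/(ckey_inv_iff HD); rewrite ?p0 ?ltnS // Hkey ckey_invK.
have Hint : kq f h m.+1 = (numq (kq f h p.-1) + alpha (fy f p) * z + fk f m.+1)%:~R.
  by rewrite (kq_pop HD hp pm HR Hrho Hy Hz) !intrD -Hg.
have Hp : (0 < p <= n)%N by rewrite p0.
have a_m : fa f m.+1 = fa f h.
  by rewrite -tau_fy ?ltn0Sn // Hy tau_bar iota_fy.
split => //; first exact: leq_trans (ltnW hp) (leqW pm).
- rewrite /endpt a_m rhopS Hy rho_e_bar //.
  by case: HE => _ ->; rewrite (rhopSpred D f p0) addrK HR.
- by rewrite Hint; exact: is_intq_int.
rewrite Hint numq_int word_uptoS interp_cat.
apply: feq_trans (feq_catr _ Hw) _.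
rewrite Hz numq_int interp_cat -catA !interp_LE !interp_power Hy a_m -(tau_fy Hp) /=.
by apply: feq_stack_word_conj; rewrite iota_fy.
Qed.

Lemma stackS m : stack m.+1 = stack_push (stack m) m.+1.
Proof.
by rewrite /stack -[m.+1]addn1 iotaD add1n addn1 foldl_cat.
Qed.

Lemma stack_invP m : (m <= n)%N -> stack_inv m (stack m).
Proof.
elim: m => [|m IH] mn; first exact: stack_inv0.
rewrite stackS; move: (IH (ltnW mn)); case: (stack m) => [|p s] H.
  exact: stack_inv_push.
rewrite /stack_push; case: eqP => E; [exact: stack_inv_pop E | exact: stack_inv_push].
Qed.

Lemma map_ckey_stack m : map ckey (stack m) = free_red ckey_inv (map ckey (iota 1 m)).
Proof.
have push_map s l :
    map ckey (foldl stack_push s l) = foldl (red_push ckey_inv) (map ckey s) (map ckey l).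
  elim: l s => [//|i l IH] s /=; rewrite IH; congr foldl.
  by case: s => [//|t s] /=; case: eqP.
exact: push_map.
Qed.

End Stack.

Section Transfer.
Variable G : gbs.
Variable D : {set E G}.
Hypothesis HD : orientation D.
Variable f : fact G.
Hypothesis Hf : is_fact f.

Local Notation n := (fn f).
Local Notation ckey := (ckey D f).
Local Notation wt := (wt f).
Local Notation wsum := (wsum f).
Local Notation rhop := (rhop D f).
Local Notation endpt := (endpt D f).
Local Notation stack_ok := (stack_ok D f).
Local Notation stack_word := (stack_word f).

Fixpoint stack_pos (s : seq nat) : Prop :=
  if s is p :: s' then [/\ stack_pos s', (head 0%N s' < p)%N & (p <= n)%N] else True.

Lemma stack_ok_pos s : stack_ok s -> stack_pos s.
Proof. by elim: s => [//|p s IH] /= [/IH]. Qed.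

Lemma endpt_pred_ckey p : (0 < p <= n)%N -> endpt p.-1 = (iotaY (ckey p).1.1, (ckey p).1.2).
Proof. by move=> Hp; rewrite /endpt /= iota_fy. Qed.

Lemma endpt_ckey p : (0 < p <= n)%N ->
  endpt p = (tau (ckey p).1.1, (ckey p).1.2 + rho_e D (ckey p).1.1).
Proof. by move=> /[dup] Hp /andP [p0 _]; rewrite /endpt /= tau_fy // -rhopSpred. Qed.

Lemma endpt_head s1 s2 : map ckey s1 = map ckey s2 -> stack_pos s1 -> stack_pos s2 ->
  endpt (head 0%N s1) = endpt (head 0%N s2).
Proof.
case: s1 s2 => [|p1 s1] [|p2 s2] //= /eqP; rewrite eqseq_cons => /andP [/eqP Hk _].
move=> [_ h1 p1n] [_ h2 p2n].
by rewrite !endpt_ckey ?Hk ?p1n ?p2n ?(leq_ltn_trans _ h1) ?(leq_ltn_trans _ h2).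
Qed.

Definition top_beta (s : seq nat) : int := if s is p :: _ then beta (fy f p) else 0.

Lemma head_wsum_gap s1 s2 : map ckey s1 = map ckey s2 -> stack_pos s1 ->
  exists z : int,
    wsum (head 0%N s2) - wsum (head 0%N s1) = wt (head 0%N s1) * (top_beta s1 * z)%:~R.
Proof.
case: s1 s2 => [|p1 s1] [|p2 s2] //=; first by exists 0; rewrite subrr mulr0.
move=> /eqP; rewrite eqseq_cons => /andP [/eqP Hk _].
by case=> _ h1 _; apply: (ckey_eq_wsum HD) => //; exact: leq_ltn_trans h1.
Qed.

Lemma stack_ok_transfer s1 s2 :
  map ckey s1 = map ckey s2 -> stack_ok s1 -> stack_pos s2 -> stack_ok s2.
Proof.
elim: s1 s2 => [|p1 s1 IH] [|p2 s2] //= /eqP; rewrite eqseq_cons => /andP [/eqP Hk /eqP Hks].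
move=> [ok1 h1 p1n HE1 Hg1] [pos2 h2 p2n].
have ok2 := IH s2 Hks ok1 pos2.
have p10 := leq_ltn_trans (leq0n _) h1; have p20 := leq_ltn_trans (leq0n _) h2.
have HE2 : endpt p2.-1 = endpt (head 0%N s2).
  rewrite endpt_pred_ckey ?p20 // -Hk -endpt_pred_ckey ?p10 // HE1.
  exact: endpt_head (stack_ok_pos ok1) pos2.
split => //; have [z' HB] := head_wsum_gap Hks (stack_ok_pos ok1).
have [z Hz] := ckey_eq_wsum HD p10 Hk.
have HR12 : rhop (head 0%N s1) = rhop (head 0%N s2).
  by case: (endpt_head Hks (stack_ok_pos ok1) pos2).
case: HE1 => _ HR1.
by rewrite (kq_gap HD h1 h2 HR1 HR12 Hz HB) Hg1 -!intrD -intrB; exact: is_intq_int.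
Qed.

Lemma stack_word_transfer s1 s2 :
  map ckey s1 = map ckey s2 -> stack_ok s1 -> stack_ok s2 -> forall z : int,
  wsum (head 0%N s2) - wsum (head 0%N s1) = wt (head 0%N s1) * (top_beta s1 * z)%:~R ->
  forall e, feq (interp (stack_word s1 e)) (interp (stack_word s2 (e - top_beta s1 * z))).
Proof.
elim: s1 s2 => [|p1 s1 IH] [|p2 s2] //=.
  by move=> _ _ _ z _ e; rewrite mul0r subr0; exact: feq_refl.
move=> /eqP; rewrite eqseq_cons => /andP [/eqP Hk /eqP Hks].
move=> [ok1 h1 p1n HE1 Hg1] [ok2 h2 p2n HE2 Hg2] z Hz e.
have [z' HB] := head_wsum_gap Hks (stack_ok_pos ok1).
have p10 := leq_ltn_trans (leq0n _) h1; have p20 := leq_ltn_trans (leq0n _) h2.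
have HR12 : rhop (head 0%N s1) = rhop (head 0%N s2).
  by case: (endpt_head Hks (stack_ok_pos ok1) (stack_ok_pos ok2)).
case: HE1 => Ha1 HR1.
have Hgap : kq f (head 0%N s2) p2.-1 =
            (numq (kq f (head 0%N s1) p1.-1) + alpha (fy f p1) * z - top_beta s1 * z')%:~R.
  by rewrite (kq_gap HD h1 h2 HR1 HR12 Hz HB) intrB intrD -Hg1.
have ey : fy f p2 = fy f p1 by case: Hk.
rewrite !interp_cat !interp_LE !interp_power Hgap numq_int ey.
rewrite -(tau_fy Hf (i:=p2)) ?p20 // ey -(tau_fy Hf (i:=p1)) ?p10 //.
apply: feq_trans (feq_catl _ (feq_edge_shift (fy f p1) z e)) _.
rewrite catA; apply: feq_catr.
rewrite (iota_fy Hf) ?p10 // Ha1; apply: feq_trans (feq_stack_word_gpow _ _ _ _) _.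
exact: IH.
Qed.

End Transfer.

Section HatWord.
Variable G : gbs.
Variable f : fact G.

Lemma eq_word_of N (A A' : nat -> V G) (Y Y' : nat -> E G) (K K' : nat -> int) :
  (forall t, (t <= N)%N -> [/\ A t = A' t, Y t = Y' t & K t = K' t]) ->
  word_of (Fact N A Y K) = word_of (Fact N A' Y' K').
Proof.
move=> H; rewrite /word_of; simpl fn; simpl fa; simpl fy; simpl fk.
case: (H 0%N (leq0n _)) => -> _ ->; congr (_ ++ _).
congr flatten; apply/eq_in_map => t; rewrite mem_iota add1n ltnS => /andP [_ tN].
by case: (H t tN) => -> -> ->.
Qed.

Lemma head_rev (l : seq nat) : head 0%N (rev l) = last 0%N l.
Proof. by case/lastP: l => // l y; rewrite rev_rcons last_rcons. Qed.

Definition hat_fact (idx : seq nat) (m : nat) : fact G :=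
  Fact (size idx) (fun t => fa f (hat_start idx t)) (fun t => fy f (hat_start idx t))
       (fun t => numq (kq f (hat_start idx t) (hat_end m idx t))).

Lemma hat_start_rcons l x t : (t <= size l)%N -> hat_start (rcons l x) t = hat_start l t.
Proof. by move=> H; rewrite /hat_start -rcons_cons nth_rcons /= ltnS H. Qed.

Lemma hat_start_rcons_size l x : hat_start (rcons l x) (size l).+1 = x.
Proof. by rewrite /hat_start /= nth_rcons ltnn eqxx. Qed.

Lemma hat_start_size l : hat_start l (size l) = last 0%N l.
Proof. by rewrite /hat_start (last_nth 0%N). Qed.

Lemma hat_start_pred l t : (0 < t)%N -> hat_start l t = nth 0%N l t.-1.
Proof. by case: t. Qed.

Lemma hat_end_start m l t : (t < size l)%N -> hat_end m l t = (hat_start l t.+1).-1.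
Proof. by move=> H; rewrite /hat_end /hat_start /=; congr predn; exact: set_nth_default. Qed.

Lemma hat_end_rcons m l x t : (t <= size l)%N -> hat_end m (rcons l x) t = hat_end x.-1 l t.
Proof.
rewrite /hat_end nth_rcons leq_eqVlt => /orP [/eqP ->|lt].
  by rewrite ltnn eqxx nth_default.
by rewrite lt; congr predn; exact: set_nth_default.
Qed.

Lemma hat_end_rcons_size m l x : hat_end m (rcons l x) (size l).+1 = m.
Proof. by rewrite /hat_end nth_default // size_rcons. Qed.

Lemma word_hat_fact idx m :
  word_of (hat_fact idx m) = stack_word f (rev idx) (numq (kq f (last 0%N idx) m)).
Proof.
elim/last_ind: idx m => [|l x IH] m; first by rewrite /word_of /= cats0.
rewrite rev_rcons /= last_rcons head_rev -IH /hat_fact size_rcons word_of_S.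
rewrite hat_start_rcons_size hat_end_rcons_size; congr (_ ++ _).
by apply: eq_word_of => t Ht; rewrite hat_start_rcons // hat_end_rcons.
Qed.

End HatWord.

Section WordShape.
Variable G : gbs.
Local Notation letter := (letter G).

Definition is_edge (l : letter) := if l is LE _ then true else false.
Definition edge_free (x : seq letter) := ~~ has is_edge x.

Lemma power_edge_free (a : V G) k : edge_free (power a k).
Proof. by rewrite /power /edge_free; case: ifP. Qed.

Lemma power_size (a : V G) k : (size (power a k) <= 1)%N.
Proof. by rewrite /power; case: ifP. Qed.

Lemma power_inj_exp (a b : V G) k k' : power a k = power b k' -> k = k'.
Proof. by rewrite /power; do 2!case: ifP => [/eqP ->|_] //; case. Qed.

Definition blocks (bs : seq (E G * seq letter)) := flatten [seq LE b.1 :: b.2 | b <- bs].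

Lemma word_of_blocks N (A : nat -> V G) (Y : nat -> E G) (K : nat -> int) :
  word_of (Fact N A Y K) =
  power (A 0%N) (K 0%N) ++ blocks [seq (Y t, power (A t) (K t)) | t <- iota 1 N].
Proof. by rewrite /word_of /blocks -map_comp. Qed.

Lemma edge_free_prefix (x p u w : seq letter) a : edge_free x -> is_edge a ->
  p ++ a :: u = x ++ w -> exists p', p = x ++ p'.
Proof.
elim: x p => [|c x IH] p Hx Ha E; first by exists p.
case: p E => [|d p] /= [Ec E]; first by move: Hx; rewrite -Ec /edge_free /= Ha.
have [|p' ->] := IH p _ Ha E; first by move: Hx; rewrite /edge_free /= negb_or => /andP [].
by exists p'; rewrite Ec.
Qed.

Lemma blocks_pinch (bs : seq (E G * seq letter)) (h : seq letter) p q y X y' :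
  edge_free h -> all (fun b => edge_free b.2) bs -> edge_free X ->
  h ++ blocks bs = p ++ LE y :: X ++ LE y' :: q ->
  exists bs1 bs2 x', bs = bs1 ++ (y, X) :: (y', x') :: bs2.
Proof.
elim: bs h p => [|[y0 x0] bs IH] h p Hh Hbs HX E.
  by move: Hh; rewrite /blocks /= cats0 in E; rewrite /edge_free E has_cat /= orbT.
have [p1 Ep] := edge_free_prefix Hh (isT : is_edge (LE y)) (esym E).
subst p; rewrite -catA in E; move/(congr1 (drop (size h))): E; rewrite !drop_size_cat // => E.
rewrite /blocks /= -/(blocks bs) in E; case/andP: Hbs => /= Hx0 Hbs.
case: p1 E => [|d p2] /= [ey E].
  subst y0; clear IH; have [X' EX] := edge_free_prefix Hx0 (isT : is_edge (LE y')) (esym E).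
  subst X; rewrite -catA in E; move/(congr1 (drop (size x0))): E; rewrite !drop_size_cat // => E.
  case: X' HX E => [|c X''] HX E.
    case: bs Hbs E => [|[y1 x1] bs''] //= _ [<- _].
    by exists [::], bs'', x1; rewrite cats0.
  case: bs Hbs E => [|[y1 x1] bs''] //= _ [Ec _].
  by move: HX; rewrite /edge_free has_cat /= -Ec orbT.
have [p3 Ep] := edge_free_prefix Hx0 (isT : is_edge (LE y)) (esym E).
subst p2; rewrite -catA in E; move/(congr1 (drop (size x0))): E; rewrite !drop_size_cat // => E.
have [bs1 [bs2 [x' ->]]] := IH [::] p3 isT Hbs HX E.
by exists ((y0, x0) :: bs1), bs2, x'.
Qed.

Lemma word_of_pinch N (A : nat -> V G) (Y : nat -> E G) (K : nat -> int) p q y X y' :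
  edge_free X -> word_of (Fact N A Y K) = p ++ LE y :: X ++ LE y' :: q ->
  exists t, [/\ (t.+1 < N)%N, Y t.+1 = y, power (A t.+1) (K t.+1) = X & Y t.+2 = y'].
Proof.
move=> HX; rewrite word_of_blocks; set bs := map _ _ => E.
have Hbs : all (fun b => edge_free b.2) bs.
  by rewrite /bs all_map; apply/allP => t _ /=; exact: power_edge_free.
have [bs1 [bs2 [x' Eb]]] := blocks_pinch (power_edge_free _ _) Hbs HX E.
have Hsz : size bs = N by rewrite size_map size_iota.
have Ht : ((size bs1).+1 < N)%N by rewrite -Hsz Eb size_cat /= !addnS !ltnS leq_addr.
have Hnth i : (i < N)%N -> nth (y, [::]) bs i = (Y i.+1, power (A i.+1) (K i.+1)).
  by move=> Hi; rewrite /bs (nth_map 0%N) ?size_iota // nth_iota // add1n.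
exists (size bs1); split => //.
- by have := Hnth _ (ltnW Ht); rewrite Eb nth_cat ltnn subnn => -[].
- by have := Hnth _ (ltnW Ht); rewrite Eb nth_cat ltnn subnn => -[].
by have := Hnth _ Ht; rewrite Eb nth_cat ltnNge leqnSn /= subSn // subnn => -[].
Qed.

Definition no_vertex_pair (l : seq letter) :=
  if l is a :: l' then path (fun a b => is_edge a || is_edge b) a l' else true.

Lemma word_of_no_vertex_pair (w : fact G) : no_vertex_pair (word_of w).
Proof.
have cons_edge y r : no_vertex_pair (LE y :: r) = no_vertex_pair r.
  by case: r => [|b r].
have cat_edge (h : seq letter) y r : (size h <= 1)%N ->
    no_vertex_pair (h ++ LE y :: r) = no_vertex_pair r.
  case: h => [|c [|d h]] // _; first exact: cons_edge.
  by rewrite /= orbT /= -(cons_edge y).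
case: w => N A Y K; rewrite word_of_blocks; move: (power_size (A 0%N) (K 0%N)).
elim: (iota 1 N) (power _ _) => [|t l IH] h Hh; first by case: h Hh => [|c [|d h]].
by rewrite /blocks /= -/(blocks _) cat_edge //; apply: IH; exact: power_size.
Qed.

Lemma no_vertex_pair_cat p q (a a' : V G) k m :
  no_vertex_pair (p ++ LV a k :: LV a' m :: q) = false.
Proof. by case: p => [|c p] //=; rewrite cat_path /= !andbF. Qed.

End WordShape.

Section HatStack.
Variable G : gbs.
Variable D : {set E G}.
Variable f : fact G.

Local Notation n := (fn f).
Local Notation endpt := (endpt D f).

Lemma stack_pos_rev idx : sorted ltn idx -> all (fun i => (0 < i <= n)%N) idx ->
  stack_pos f (rev idx).
Proof.
elim/last_ind: idx => [//|l x IH] Hs; rewrite all_rcons => /andP [/andP [x0 xn] Hall].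
have [Hl lx] : sorted ltn l /\ (last 0%N l < x)%N.
  by case: l Hs {IH Hall} => [|a l] //=; rewrite rcons_path => /andP [].
by rewrite rev_rcons /= head_rev; split => //; apply: IH.
Qed.

Lemma stack_ok_rev idx : stack_ok D f (rev idx) -> forall t, (0 < t <= size idx)%N ->
  [/\ (hat_start idx t.-1 < hat_start idx t)%N,
      endpt (hat_start idx t).-1 = endpt (hat_start idx t.-1) &
      is_intq (kq f (hat_start idx t.-1) (hat_start idx t).-1)].
Proof.
elim/last_ind: idx => [_ [] //|l x IH]; rewrite rev_rcons /= => -[ok hx xn HE Hg] t.
rewrite size_rcons => /andP [t0]; rewrite leq_eqVlt => /orP [/eqP ->|]; last rewrite ltnS => Ht.
  by rewrite hat_start_rcons_size /= hat_start_rcons // hat_start_size -head_rev.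
have Ht1 : (t.-1 <= size l)%N := leq_trans (leq_pred t) Ht.
by rewrite !hat_start_rcons //; apply: IH => //; rewrite t0.
Qed.

Lemma freely_reduced_nsimC idx t : (t.+1 < size idx)%N ->
  freely_reduced D f (cls idx) -> ~ simC D f (nth 0%N idx t.+1) (nth 0%N idx t).
Proof.
move=> Ht Hfr HC; apply: (Hfr (cls (take t idx)) (cls (drop t.+2 idx)) (nth 0%N idx t, true)
                              (nth 0%N idx t.+1, true)); last by right.
rewrite -[in LHS](cat_take_drop t idx) (drop_nth 0%N (ltnW Ht)) (drop_nth 0%N Ht).
by rewrite /cls map_cat.
Qed.

End HatStack.

Section Corollary.
Variable G : gbs.
Variable D : {set E G}.
Variable f : fact G.
Variable idx : seq nat.
Hypothesis HD : orientation D.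
Hypothesis Hf : is_fact f.
Hypothesis Hsorted : sorted ltn idx.
Hypothesis Hrange : all (fun i => (0 < i <= fn f)%N) idx.
Hypothesis Hfree : freely_reduced D f (cls idx).
Hypothesis Hleq : Leq D f (cls (iota 1 (fn f))) (cls idx).

Local Notation n := (fn f).
Local Notation ckey := (ckey D f).
Local Notation endpt := (endpt D f).

Lemma stack_keys : map ckey (stack D f n) = map ckey (rev idx).
Proof.
rewrite map_ckey_stack -(map_sig_key_cls D f (iota 1 n)) (Leq_key_red HD Hleq).
by rewrite map_sig_key_cls (free_red_reduced (ckey_invK HD)) ?map_rev // freely_reduced_keys.
Qed.

Lemma hat_stack_ok : stack_ok D f (rev idx).
Proof.
have [ok _ _ _ _] := stack_invP HD Hf (leqnn n).
exact: (stack_ok_transfer HD Hf stack_keys ok (stack_pos_rev Hsorted Hrange)).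
Qed.

Lemma hat_tail :
  [/\ endpt n = endpt (last 0%N idx), is_intq (kq f (last 0%N idx) n) &
      feq (interp (word_of f)) (interp (stack_word f (rev idx) (numq (kq f (last 0%N idx) n))))].
Proof.
have [ok1 h1n HE1 Hk1 Hw1] := stack_invP HD Hf (leqnn n).
have [z Hz] := head_wsum_gap HD stack_keys (stack_ok_pos ok1).
have Hend := endpt_head Hf stack_keys (stack_ok_pos ok1) (stack_ok_pos hat_stack_ok).
rewrite head_rev in Hz Hend.
have h2n : (last 0%N idx <= n)%N.
  by have := mem_last 0%N idx; rewrite inE => /orP [/eqP ->|/(allP Hrange) /andP []].
set s1 := stack D f n in ok1 h1n HE1 Hk1 Hw1 Hz Hend *.
have Hk2 : kq f (last 0%N idx) n = (numq (kq f (head 0%N s1) n) - top_beta f s1 * z)%:~R.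
  by case: Hend => _ HR; rewrite (kq_shift_start HD h1n h2n HR Hz) intrB -Hk1.
split; [by rewrite HE1 Hend | by rewrite Hk2; exact: is_intq_int |].
rewrite Hk2 numq_int; apply: feq_trans Hw1 _; rewrite -head_rev in Hz.
exact: (stack_word_transfer HD Hf stack_keys ok1 hat_stack_ok Hz _).
Qed.

Lemma hat_kq_int t : (t <= size idx)%N -> is_intq (kq f (hat_start idx t) (hat_end n idx t)).
Proof.
rewrite leq_eqVlt => /orP [/eqP ->|Ht].
  by rewrite hat_start_size /hat_end nth_default //; case: hat_tail.
rewrite hat_end_start //; have := stack_ok_rev hat_stack_ok (t := t.+1).
by rewrite Ht => /(_ isT) [].
Qed.

Lemma hat_start_range t : (0 < t <= size idx)%N -> (0 < hat_start idx t <= n)%N.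
Proof.
case/andP=> t0 tn; rewrite hat_start_pred //; apply: (allP Hrange); apply: mem_nth.
by rewrite prednK.
Qed.

Lemma hat_is_fact : is_fact (hat_fact f idx n).
Proof.
split=> [t Ht|] /=.
  have Hp := hat_start_range Ht; rewrite iota_fy // tau_fy //; split => //.
  by case: (stack_ok_rev hat_stack_ok Ht) => _ [].
rewrite hat_start_size; case: hat_tail => -[<- _] _ _; exact: (proj2 Hf).
Qed.

Lemma hat_britton_reduced : britton_reduced (word_of (hat_fact f idx n)).
Proof.
split=> [p q a k m _ _ E|p q y m].
  by have := word_of_no_vertex_pair (hat_fact f idx n); rewrite E no_vertex_pair_cat.
case/(word_of_pinch (power_edge_free _ _)) => t [/= Ht Ey /power_inj_exp Ek Eby].
apply: (freely_reduced_nsimC Ht Hfree); change (simC D f (hat_start idx t.+2) (hat_start idx t.+1)).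
have [/= lt12 [_ HR] _] := stack_ok_rev hat_stack_ok (t := t.+2) Ht.
have Hkq : kq f (hat_start idx t.+1) (hat_start idx t.+2).-1 = (beta y * m)%:~R.
  by rewrite -Ek -(hat_end_start n Ht); exact: hat_kq_int (ltnW Ht).
have Hrho : rho D f (hat_start idx t.+1) (hat_start idx t.+2).-1 = 0.
  by rewrite rho_rhop ?HR ?subrr // -ltnS prednK // (leq_ltn_trans (leq0n _) lt12).
split; first exact: hat_start_range.
split; first exact: (hat_start_range (t := t.+1) (ltnW Ht)).
by split; [rewrite Eby Ey | right; split => //; split => //; exists m; rewrite Ey].
Qed.

Lemma hat_Feq : Feq (word_of f) (word_of (hat_fact f idx n)).
Proof. by rewrite /Feq word_hat_fact; case: hat_tail. Qed.

End Corollary.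

Theorem corollary3p9 (G : gbs) (D : {set E G}) (f : fact G) (idx : seq nat) :
  orientation D ->
  is_fact f ->
  sorted ltn idx ->
  all (fun i => (0 < i <= fn f)%N) idx ->
  freely_reduced D f (cls idx) ->
  Leq D f (cls (iota 1 (fn f))) (cls idx) ->
  exists kh : nat -> int,
    (forall t, (t <= size idx)%N ->
       ((kh t)%:~R : rat)%R = kq f (hat_start idx t) (hat_end (fn f) idx t)) /\
    let wh := Fact (size idx) (fun t => fa f (hat_start idx t))
                   (fun t => fy f (hat_start idx t)) kh in
    is_fact wh /\ britton_reduced (word_of wh) /\ Feq (word_of f) (word_of wh).
Proof.
move=> HD Hf Hs Hr Hfr HL.
exists (fun t => numq (kq f (hat_start idx t) (hat_end (fn f) idx t))); split.
  by move=> t Ht; rewrite -(hat_kq_int HD Hf Hs Hr Hfr HL Ht).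
split; first exact: (hat_is_fact HD Hf Hs Hr Hfr HL).
split; first exact: (hat_britton_reduced HD Hf Hs Hr Hfr HL).
exact: (hat_Feq HD Hf Hs Hr Hfr HL).
Qed.
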